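(* Let $G$ be a connected graph with $n$ nodes and fix $t\ge 0$. Then there exists an index $i\in\{1,\dots,n\}$ such that, writing $e_i$ for the $i$-th standard basis vector, $$\mathbb E\|v(t)-\bar v\|_1\ \text{ for } v(0)=e_i \;\ge\; \mathbb E\|v(t)-\bar v\|_1\ \text{ for } v(0)=w$$ for every $w\in\mathbb R^n$ with $\|w\|_1=1$. That is, the maximum of $\mathbb E\|v(t)-\bar v\|_1$ over all initial vectors of unit $L^1$ norm is attained at some $e_i$.
   Context: Let $G=(V,E)$ be a finite, undirected, connected graph with $V=\{1,\dots,n\}$. The averaging process on $G$: the state vector $v(t)\in\mathbb R^n$, $t=0,1,2,\dots$, starts from a given $v(0)$; at each step $t\ge 1$ an edge $\{i,j\}\in E$ is chosen uniformly at random (independently of all previous choices) and both $v_i$ and $v_j$ are replaced by $(v_i+v_j)/2$, all other coordinates unchanged. Let $\bar v=(a,\dots,a)^T$ with $a=\frac1n\sum_i v_i(0)$ (so $\bar v$ depends on the initial vector). *)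

From HB Require Import structures.
From mathcomp Require Import all_boot all_order all_algebra.
From mathcomp Require Import reals.
Set Implicit Arguments. Unset Strict Implicit. Unset Printing Implicit Defensive.
Import Order.TTheory GRing.Theory Num.Theory.
Local Open Scope ring_scope.

Section Averaging.
Variables (R : realType) (n : nat).

(* Edges of the simple graph given by the symmetric irreflexive relation e
   on 'I_n, each unordered edge {i,j} represented once as (i,j) with i < j. *)
Definition edges (e : rel 'I_n) : {set 'I_n * 'I_n} :=
  [set p : 'I_n * 'I_n | (p.1 < p.2)%N && e p.1 p.2].

Definition avg_step (p : 'I_n * 'I_n) (v : 'rV[R]_n) : 'rV[R]_n :=
  \row_k (if (k == p.1) || (k == p.2) then (v 0 p.1 + v 0 p.2) / 2 else v 0 k).

Definition avg_run (v : 'rV[R]_n) (s : seq ('I_n * 'I_n)) : 'rV[R]_n :=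
  foldl (fun w p => avg_step p w) v s.

Definition vbar (v : 'rV[R]_n) : 'rV[R]_n :=
  const_mx ((\sum_i v 0 i) / n%:R).

Definition norm1 (v : 'rV[R]_n) : R := \sum_i `|v 0 i|.

(* E || v(t) - \bar v ||_1 for v(0) = v0: average over the #|E|^t equally
   likely sequences of t independent uniformly chosen edges. *)
Definition expected_dev (e : rel 'I_n) (t : nat) (v0 : 'rV[R]_n) : R :=
  (\sum_(f : {ffun 'I_t -> 'I_n * 'I_n} | [forall k, f k \in edges e])
      norm1 (avg_run v0 (fgraph f) - vbar v0)) / (#|edges e| ^ t)%:R.

End Averaging.

From HB Require Import structures.
From mathcomp Require Import all_boot all_order all_algebra.
From mathcomp Require Import reals.
From mathcomp Require Import ring.
Set Implicit Arguments. Unset Strict Implicit. Unset Printing Implicit Defensive.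
Import Order.TTheory GRing.Theory Num.Theory.
Local Open Scope ring_scope.

(* For a fixed sequence of chosen edges, v(0) |-> v(t) - \bar v is linear,
   so the expected L1 deviation is a seminorm of the initial vector. Writing
   w = \sum_i w_i e_i, the triangle inequality bounds a seminorm of w by
   \sum_i |w_i| N(e_i) <= ||w||_1 max_i N(e_i). Neither the symmetry nor the
   connectivity of the graph plays any role. *)

Section Seminorm.
Variables (R : numDomainType) (V : lmodType R).

Record seminorm (N : V -> R) : Prop := Seminorm {
  seminormZ : forall a v, N (a *: v) = `|a| * N v;
  seminormD : forall v w, N (v + w) <= N v + N w }.

Lemma seminorm0 N : seminorm N -> N 0 = 0.
Proof. by move=> hN; rewrite -(scale0r 0) (seminormZ hN) normr0 mul0r. Qed.

Lemma seminorm_sum_le N (I : finType) (c : I -> R) (u : I -> V) :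
  seminorm N -> N (\sum_i c i *: u i) <= \sum_i `|c i| * N (u i).
Proof.
move=> hN; elim/big_rec2: _ => [|i x y _ IH]; first by rewrite seminorm0.
by apply: le_trans (seminormD hN _ _) _; rewrite (seminormZ hN) lerD2l.
Qed.

Lemma seminorm_sum (I : finType) (P : pred I) (N : I -> V -> R) :
  (forall i, seminorm (N i)) -> seminorm (fun v => \sum_(i | P i) N i v).
Proof.
move=> hN; split=> [a v|v w].
  by rewrite mulr_sumr; apply: eq_bigr => i _; apply: seminormZ.
by rewrite -big_split; apply: ler_sum => i _; apply: seminormD.
Qed.

Lemma seminormMr N (c : R) :
  0 <= c -> seminorm N -> seminorm (fun v => N v * c).
Proof.
move=> c_ge0 hN; split=> [a v|v w]; first by rewrite (seminormZ hN) mulrA.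
by rewrite -mulrDl ler_wpM2r // seminormD.
Qed.

End Seminorm.

Lemma seminorm_comp (R : numDomainType) (U V : lmodType R)
    (f : {linear U -> V}) (N : V -> R) :
  seminorm N -> seminorm (N \o f).
Proof.
by move=> hN; split=> [a v|v w] /=; rewrite ?linearZZ ?linearD;
  [exact: seminormZ | exact: seminormD].
Qed.

Section Averaging.
Variables (R : realType) (n : nat).

Lemma norm1_seminorm : seminorm (@norm1 R n).
Proof.
split=> [a v|v w]; rewrite /norm1.
  by rewrite mulr_sumr; apply: eq_bigr => i _; rewrite mxE normrM.
by rewrite -big_split; apply: ler_sum => i _; rewrite mxE ler_normD.
Qed.

Lemma seminorm_le_norm1_max (N : 'rV[R]_n -> R) (i0 : 'I_n) :
  seminorm N -> exists i, forall w, N w <= norm1 w * N (delta_mx 0 i).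
Proof.
move=> hN; exists [arg max_(i > i0) N (delta_mx 0 i)]%O.
case: arg_maxP => // i _ Ni_max w.
rewrite {1}(matrix_sum_delta w) big_ord1.
apply: le_trans (seminorm_sum_le _ _ hN) _.
rewrite /norm1 mulr_suml; apply: ler_sum => j _.
by apply: ler_wpM2l; [exact: normr_ge0 | exact: Ni_max].
Qed.

Lemma avg_step_is_linear p : linear (@avg_step R n p).
Proof.
move=> a v w; apply/rowP => k; rewrite /avg_step !mxE.
by case: ifP => _; rewrite ?mxE //; ring.
Qed.

Lemma avg_run_is_linear s : linear (@avg_run R n ^~ s).
Proof.
elim: s => [|p s IH] a v w //=.
by rewrite /avg_run /= avg_step_is_linear -IH.
Qed.

Lemma vbar_is_linear : linear (@vbar R n).
Proof.
move=> a v w; apply/rowP => k; rewrite !mxE.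
under eq_bigr do rewrite !mxE.
by rewrite big_split /= -mulr_sumr; ring.
Qed.

Definition deviation (s : seq ('I_n * 'I_n)) (v : 'rV[R]_n) : 'rV[R]_n :=
  avg_run v s - vbar v.

Lemma deviation_is_linear s : linear (deviation s).
Proof.
move=> a v w; rewrite /deviation avg_run_is_linear vbar_is_linear.
by rewrite scalerBr opprD addrACA.
Qed.

HB.instance Definition _ s :=
  GRing.isLinear.Build R 'rV[R]_n 'rV[R]_n *:%R (deviation s) (deviation_is_linear s).

Lemma expected_dev_seminorm (e : rel 'I_n) t : seminorm (@expected_dev R n e t).
Proof.
apply: seminormMr; first by rewrite invr_ge0.
apply: seminorm_sum => f.
exact: (seminorm_comp (deviation (fgraph f)) norm1_seminorm).
Qed.

End Averaging.

Theorem theorem2 (R : realType) (n : nat) (e : rel 'I_n)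
  (hn : (0 < n)%N) (hsym : symmetric e) (hirr : irreflexive e)
  (hconn : forall i j : 'I_n, connect e i j) (t : nat) :
  exists i : 'I_n, forall w : 'rV[R]_n, norm1 w = 1 ->
    expected_dev e t w <= expected_dev e t (delta_mx 0 i).
Proof.
have [i dev_le] := seminorm_le_norm1_max (Ordinal hn) (expected_dev_seminorm R e t).
by exists i => w w_unit; have := dev_le w; rewrite w_unit mul1r.
Qed.
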